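(* Let $d\in\{-1,-2,-3,-7,-11,-19,-43,-67,-163\}$ and let $R$ be the ring of algebraic integers of the imaginary quadratic number field $\mathbb{Q}[\sqrt d]$. If $A$ is a nonzero ideal of $R$, then there is a nonzero element $m\in R$ such that $P_A=\tau_m$. Moreover, there is a positive ordinary integer $n$ such that $P_{A\overline A}=\tau_n$, where $\overline A=\{\overline a: a\in A\}$ is the complex conjugate of $A$ and $A\overline A$ is the product ideal.
   Context: Here $P_H$ for a subset $H\subseteq R$ is the principal congruence on the multiplicative semigroup $R_{mult}$ of $R$: for $a\in R$, $H\dots a=\{(x,y)\in R\times R: xay\in H\}$ and $P_H=\{(a,b): H\dots a=H\dots b\}$. For $m\in R$, $\tau_m$ is the relation on $R$ given by $(a,b)\in\tau_m$ iff $\gcd(a,m)$ and $\gcd(b,m)$ are associates in $R$ (for these $d$, $R$ is a unique factorization domain, so gcds exist). *)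

From mathcomp Require Import all_boot all_order all_algebra all_field.
Set Implicit Arguments. Unset Strict Implicit. Unset Printing Implicit Defensive.
Import Order.TTheory GRing.Theory Num.Theory.
Local Open Scope ring_scope.

Definition inR (d : int) (z : algC) : Prop :=
  z \in Aint /\ exists p q : rat, z = ratr p + ratr q * sqrtC (d%:~R).

Definition is_ideal (d : int) (A : algC -> Prop) : Prop :=
  [/\ (forall z, A z -> inR d z),
      A 0,
      (forall x y, A x -> A y -> A (x + y)),
      (forall x, A x -> A (- x)) &
      (forall r x, inR d r -> A x -> A (r * x))].

Definition nonzero_set (A : algC -> Prop) : Prop := exists a, A a /\ a <> 0.

Definition conj_set (A : algC -> Prop) : algC -> Prop := fun z => A (z^*).

Definition prod_set (A B : algC -> Prop) : algC -> Prop := fun z =>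
  exists s : seq (algC * algC),
    (forall p, p \in s -> A p.1 /\ B p.2) /\
    z = \sum_(p <- s) p.1 * p.2.

(* P_H on R: (a,b) in P_H iff H..a = H..b, where
   H..a = {(x,y) in R x R : x a y in H}. *)
Definition P_rel (d : int) (H : algC -> Prop) (a b : algC) : Prop :=
  forall x y, inR d x -> inR d y -> (H (x * a * y) <-> H (x * b * y)).

Definition dvdR (d : int) (u v : algC) : Prop := exists w, inR d w /\ v = u * w.

Definition is_gcdR (d : int) (g a b : algC) : Prop :=
  [/\ inR d g, dvdR d g a, dvdR d g b &
      forall c, inR d c -> dvdR d c a -> dvdR d c b -> dvdR d c g].

Definition assocR (d : int) (u v : algC) : Prop := dvdR d u v /\ dvdR d v u.

Definition tau_rel (d : int) (m a b : algC) : Prop :=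
  exists g1 g2, [/\ is_gcdR d g1 a m, is_gcdR d g2 b m & assocR d g1 g2].

Definition heegner_d : seq int := [:: -1; -2; -3; -7; -11; -19; -43; -67; -163].

(* For these nine d the ring R of integers of Q(sqrt d) is Z[omega], with omega = sqrt d
   (d = -1, -2) or omega = (1 + sqrt d)/2, and R is a principal ideal domain.  The latter
   follows from the Dedekind-Hasse criterion: if a does not divide b, some s b - t a has
   0 < |s b - t a| < |a|.  With r = b conj(a) and n = N(a) it suffices to find
   0 < |s r - n t| < n; splitting off a prime factor p of n reduces this to n = p.
   If p does not divide N(r), a Bezout relation gives s r - p t = 1; otherwise
   s r - p t = e + omega with p | N(e + omega), and the condition 4k < 3p^2 for such p (a
   finite check for the Heegner numbers) makes e + omega or e - p + omega shorter than p.
   In a principal ideal domain A = (m), and m | c a iff m / gcd(a, m) divides c, so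
   P_A(a, b) says exactly that m / gcd(a, m) and m / gcd(b, m) are associates, i.e.
   that gcd(a, m) and gcd(b, m) are.  Finally A conj(A) = (m conj(m)) = (N(m)). *)

From mathcomp Require Import all_boot all_order all_algebra all_field.
From mathcomp Require Import zify ring.
From Stdlib Require Import Classical.
Import Order.TTheory GRing.Theory Num.Theory.
Local Open Scope ring_scope.

Lemma int_halves (a : int) : exists a' r : int, a = 2 * a' + r /\ (r = 0 \/ r = 1).
Proof. exists (a %/ 2)%Z, (a %% 2)%Z; lia. Qed.

Lemma dvdz2_sub_of_norm_1mod4 {k a b : int} :
  (4 %| a * a - (1 - 4 * k) * b * b)%Z -> (2 %| a - b)%Z.
Proof.
have [a' [ra [-> hra]]] := int_halves a.
have [b' [rb [-> hrb]]] := int_halves b.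
by case: hra => ->; case: hrb => ->; nia.
Qed.

Lemma dvdz2_of_norm_23mod4 {d a b : int} : (d %% 4 = 2)%Z \/ (d %% 4 = 3)%Z ->
  (4 %| a * a - d * b * b)%Z -> (2 %| a)%Z && (2 %| b)%Z.
Proof.
have [a' [ra [-> hra]]] := int_halves a.
have [b' [rb [-> hrb]]] := int_halves b.
move=> hd.
have [d' [rd [-> hrd]]] : exists d' rd : int, d = 4 * d' + rd /\ (rd = 2 \/ rd = 3).
  by exists (d %/ 4)%Z, (d %% 4)%Z; lia.
by case: hrd => ->; case: hra => ->; case: hrb => ->; nia.
Qed.

Lemma dvdz_sqr_prime {p u : int} : prime `|p| -> (p %| u * u)%Z -> (p %| u)%Z.
Proof. by move=> pp; rewrite !dvdzE abszM Euclid_dvdM // orbb. Qed.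

Lemma prime_bezoutz {p m : int} : prime `|p| -> ~~ (p %| m)%Z ->
  exists u v : int, u * m + v * p = 1.
Proof.
move=> pp pNm; have /coprimezP[[u v] /= huv] : coprimez m p.
  by rewrite coprimezE coprime_sym prime_coprime // -dvdzE.
by exists u, v.
Qed.

(** * Principal ideals and the relations P_H and tau_m *)

Section PrincipalIdeals.
Variable d : int.
Hypothesis R1 : inR d 1.
Hypothesis RD : forall {u v}, inR d u -> inR d v -> inR d (u + v).
Hypothesis RN : forall {u}, inR d u -> inR d (- u).
Hypothesis RM : forall {u v}, inR d u -> inR d v -> inR d (u * v).
Hypothesis R_principal : forall {A}, is_ideal d A -> nonzero_set A ->
  exists m, [/\ inR d m, m <> 0 & forall z, A z <-> dvdR d m z].

Lemma R0 : inR d 0.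
Proof. by have := RD R1 (RN R1); rewrite addrN. Qed.

Lemma dvdR_refl u : dvdR d u u.
Proof. by exists 1; rewrite mulr1. Qed.

Lemma dvdR_trans u v w : dvdR d u v -> dvdR d v w -> dvdR d u w.
Proof.
by move=> [x [hx ->]] [y [hy ->]]; exists (x * y); split; [apply: RM | rewrite mulrA].
Qed.

Definition lincomb (a m z : algC) : Prop :=
  exists u v, [/\ inR d u, inR d v & z = u * a + v * m].

Lemma lincomb_is_ideal {a m} : inR d a -> inR d m -> is_ideal d (lincomb a m).
Proof.
move=> ha hm; split.
- by move=> z [u [v [hu hv ->]]]; apply: RD; apply: RM.
- by exists 0, 0; split; [exact: R0 | exact: R0 | rewrite !mul0r addr0].
- move=> x y [u [v [hu hv ->]]] [u' [v' [hu' hv' ->]]].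
  by exists (u + u'), (v + v'); split; [apply: RD | apply: RD | ring].
- by move=> x [u [v [hu hv ->]]]; exists (- u), (- v); split; [apply: RN | apply: RN | ring].
- move=> r x hr [u [v [hu hv ->]]].
  by exists (r * u), (r * v); split; [apply: RM | apply: RM | ring].
Qed.

Lemma gcdR_exists {a m} : inR d a -> inR d m -> m != 0 ->
  exists g, is_gcdR d g a m /\ lincomb a m g.
Proof.
move=> ha hm m0.
have [|g [hg _ gE]] := R_principal (lincomb_is_ideal ha hm).
  exists m; split; last exact/eqP.
  by exists 0, 1; split; [exact: R0 | exact: R1 | rewrite mul0r add0r mul1r].
have [u [v [hu hv uvE]]] : lincomb a m g by apply/gE; exact: dvdR_refl.
exists g; split; last by exists u, v.
split => //.
- by apply/gE; exists 1, 0; split; [exact: R1 | exact: R0 | ring].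
- by apply/gE; exists 0, 1; split; [exact: R0 | exact: R1 | ring].
move=> c hc [a' [ha' aE]] [m' [hm' mE]].
exists (u * a' + v * m'); split; first by apply: RD; apply: RM.
by rewrite uvE aE mE; ring.
Qed.

Lemma gcdR_lincomb {a m g} : inR d a -> inR d m -> m != 0 -> is_gcdR d g a m ->
  lincomb a m g.
Proof.
move=> ha hm m0 [_ _ _ gmax].
have [h [[hh ha' hm' _] [u [v [hu hv hE]]]]] := gcdR_exists ha hm m0.
have [w [hw ->]] := gmax h hh ha' hm'.
by exists (u * w), (v * w); split; [apply: RM | apply: RM | rewrite hE; ring].
Qed.

Lemma dvdR_gcd_cofactor {a m g m1} : inR d a -> inR d m -> m != 0 ->
  is_gcdR d g a m -> m = g * m1 ->
  forall c, inR d c -> (dvdR d m (c * a) <-> dvdR d m1 c).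
Proof.
move=> ha hm m0 hg mE c hc.
have [u [v [hu hv gE]]] := gcdR_lincomb ha hm m0 hg.
case: hg => _ [a' [ha' aE]] _ _.
have g0 : g != 0 by apply: contraNneq m0 => g0; rewrite mE g0 mul0r.
have bezout : u * a' + v * m1 = 1.
  by apply: (mulfI g0); rewrite mulr1 [RHS]gE aE mE; ring.
split=> [[r [hr caE]] | [r [hr ->]]].
  exists (u * r + c * v); split; first by apply: RD; apply: RM.
  have ca'E : c * a' = m1 * r by apply: (mulfI g0); rewrite mulrCA -aE caE mE mulrA.
  transitivity (u * (c * a') + c * v * m1); last by rewrite ca'E; ring.
  by rewrite -[LHS]mulr1 -bezout; ring.
by exists (r * a'); split; [apply: RM | rewrite mE aE; ring].
Qed.

Lemma dvdR_cofactor {g1 m1 g2 m2} : g1 * m1 = g2 * m2 -> g2 * m2 != 0 ->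
  dvdR d g2 g1 <-> dvdR d m1 m2.
Proof.
move=> E nz.
have g20 : g2 != 0 by apply: contraNneq nz => ->; rewrite mul0r.
have m10 : m1 != 0 by apply: contraNneq nz => m10; rewrite -E m10 mulr0.
split=> [[w [hw g1E]] | [w [hw m2E]]]; exists w; split => //.
  by apply: (mulfI g20); rewrite -E g1E; ring.
by apply: (mulIf m10); rewrite E m2E; ring.
Qed.

Lemma assocR_dvdP u v : inR d u -> inR d v ->
  assocR d u v <-> forall c, inR d c -> (dvdR d u c <-> dvdR d v c).
Proof.
move=> hu hv; split=> [[uv vu] c hc | same].
  by split; [apply: dvdR_trans | apply: dvdR_trans].
by split; [apply/same => //; exact: dvdR_refl | apply/same => //; exact: dvdR_refl].
Qed.

Lemma dvdR_mul_iff_assoc_gcd {a b m g1 g2} : inR d a -> inR d b -> inR d m -> m != 0 ->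
  is_gcdR d g1 a m -> is_gcdR d g2 b m ->
  (forall c, inR d c -> (dvdR d m (c * a) <-> dvdR d m (c * b))) <-> assocR d g1 g2.
Proof.
move=> ha hb hm m0 hg1 hg2.
have [_ _ [m1 [hm1 m1E]] _] := hg1; have [_ _ [m2 [hm2 m2E]] _] := hg2.
have E : g1 * m1 = g2 * m2 by rewrite -m1E -m2E.
have nz : g2 * m2 != 0 by rewrite -m2E.
have nz' : g1 * m1 != 0 by rewrite -m1E.
rewrite /assocR (dvdR_cofactor E nz) (dvdR_cofactor (esym E) nz') and_comm.
rewrite -/(assocR d m1 m2) assocR_dvdP //.
split=> same c hc.
  rewrite -(dvdR_gcd_cofactor ha hm m0 hg1 m1E _ hc).
  by rewrite -(dvdR_gcd_cofactor hb hm m0 hg2 m2E _ hc); apply: same.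
rewrite (dvdR_gcd_cofactor ha hm m0 hg1 m1E _ hc).
by rewrite (dvdR_gcd_cofactor hb hm m0 hg2 m2E _ hc); apply: same.
Qed.

Lemma P_rel_principal {H : algC -> Prop} {m a b} : inR d a -> inR d b ->
  (forall z, inR d z -> (H z <-> dvdR d m z)) ->
  P_rel d H a b <-> forall c, inR d c -> (dvdR d m (c * a) <-> dvdR d m (c * b)).
Proof.
move=> ha hb Hm; split=> [hP c hc | same x y hx hy].
  have := hP c 1 hc R1; rewrite !mulr1.
  by rewrite !Hm //; apply: RM.
have hxy := RM hx hy.
rewrite [x * a * y]mulrAC [x * b * y]mulrAC !Hm; try by apply: RM.
exact: same.
Qed.

Lemma P_rel_tau {H : algC -> Prop} {m a b} : inR d m -> m != 0 ->
  inR d a -> inR d b -> (forall z, inR d z -> (H z <-> dvdR d m z)) ->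
  P_rel d H a b <-> tau_rel d m a b.
Proof.
move=> hm m0 ha hb Hm; rewrite (P_rel_principal ha hb Hm).
split=> [same | [g1 [g2 [hg1 hg2 g12]]]]; last first.
  exact/(dvdR_mul_iff_assoc_gcd ha hb hm m0 hg1 hg2).
have [g1 [hg1 _]] := gcdR_exists ha hm m0.
have [g2 [hg2 _]] := gcdR_exists hb hm m0.
by exists g1, g2; split => //; apply/(dvdR_mul_iff_assoc_gcd ha hb hm m0 hg1 hg2).
Qed.

Hypothesis R_conj : forall {u}, inR d u -> inR d u^*.

Lemma prod_conj_principal A m : (forall z, A z <-> dvdR d m z) ->
  forall z, prod_set A (conj_set A) z <-> dvdR d (m * m^*) z.
Proof.
move=> Am z; split=> [[s [sA ->]] | [w [hw ->]]]; last first.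
  exists [:: (m, m^* * w)]; split; last by rewrite big_seq1 mulrA.
  move=> p; rewrite inE => /eqP -> /=; split; first by apply/Am; exact: dvdR_refl.
  by apply/Am; exists w^*; split; [apply: R_conj | rewrite rmorphM /= conjCK].
elim: s sA => [|[x y] s IH] sA.
  by rewrite big_nil; exists 0; split; [exact: R0 | rewrite mulr0].
rewrite big_cons /=.
have /= [/Am[u [hu ->]] /Am[v [hv yE]]] := sA (x, y) (mem_head _ _).
have [w [hw ->]] : dvdR d (m * m^*) (\sum_(p <- s) p.1 * p.2).
  by apply: IH => p ps; apply: sA; rewrite in_cons ps orbT.
exists (u * v^* + w); split; first by apply: RD => //; apply: RM => //; apply: R_conj.
by rewrite -[y]conjCK yE rmorphM /=; ring.
Qed.

End PrincipalIdeals.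

(** * The quadratic order Z[omega] *)

Lemma Aint_quadratic_root (w w' : algC) (s p : int) :
  w + w' = s%:~R -> w * w' = p%:~R -> w \in Aint.
Proof.
move=> hs hp; apply: (@root_monic_Aint (('X - w%:P) * ('X - w'%:P))).
- by rewrite rootM root_XsubC eqxx.
- by rewrite monicMl monicXsubC.
have -> : ('X - w%:P) * ('X - w'%:P) = 'X^2 - (s%:~R : algC) *: 'X + (p%:~R : algC)%:P.
  by rewrite -hs -hp -mul_polyC !(rmorphD, rmorphM) /=; ring.
apply/polyOverP => i; rewrite coefD coefB coefXn coefZ coefX coefC.
apply/intrP; case: i => [|[|[|i]]] /=;
  [exists p | exists (- s) | exists 1 | exists 0]; rewrite ?rmorphN ?rmorph1 /=; ring.
Qed.

Lemma Aint_Crat_int (z : algC) : z \in Aint -> z \in Crat -> exists n : int, z = n%:~R.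
Proof. by move=> zA zQ; apply/intrP; exact: Cint_rat_Aint. Qed.

Section QuadraticOrder.
Variables d t0 k : int.
Hypothesis d_def : (t0 = 0 /\ d = - k) \/ (t0 = 1 /\ d = 1 - 4 * k).
Hypothesis k_gt0 : 0 < k.

Definition sqrtd : algC := sqrtC d%:~R.
Definition omega : algC := if t0 == 0 then sqrtd else (1 + sqrtd) / 2.
Definition zomega (x y : int) : algC := x%:~R + y%:~R * omega.
Definition qform (x y : int) : int := x * x + t0 * x * y + k * y * y.

Lemma d_lt0 : d < 0.
Proof. by case: d_def => -[_ ->]; lia. Qed.

Lemma t0_01 : t0 = 0 \/ t0 = 1.
Proof. by case: d_def => -[->]; [left | right]. Qed.

Lemma qform_ge0 x y : 0 <= qform x y.
Proof.
have h1 : 0 <= (2 * x + y) ^+ 2 by rewrite sqr_ge0.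
have h2 : 0 <= (k - 1) * y ^+ 2 by rewrite mulr_ge0 ?sqr_ge0 //; lia.
by rewrite /qform; case: t0_01 => ->; nia.
Qed.

Lemma sqrtd_sqr : sqrtd * sqrtd = d%:~R.
Proof. by rewrite -expr2 sqrtCK. Qed.

Lemma sqrtd_conj : sqrtd^* = - sqrtd.
Proof.
have sd0 : sqrtd != 0 by rewrite sqrtC_eq0 intr_eq0 ltr0_neq0 // d_lt0.
have : sqrtd * (sqrtd^* + sqrtd) == 0.
  rewrite mulrDr -normCK -normrX expr2 sqrtd_sqr ltr0_norm ?ltrz0 ?d_lt0 //.
  by rewrite addNr.
by rewrite mulf_eq0 (negPf sd0) addr_eq0 => /eqP.
Qed.

Lemma omega_sqr : omega * omega = t0%:~R * omega - k%:~R.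
Proof.
have hd := sqrtd_sqr; rewrite /omega.
case: d_def hd => -[-> ->] hd /=; first by rewrite hd mul0r sub0r rmorphN.
rewrite rmorphB rmorphM /= in hd.
have -> : (1 + sqrtd) / 2 * ((1 + sqrtd) / 2) = (1 + 2 * sqrtd + sqrtd * sqrtd) / 4 by field.
by rewrite hd rmorph1 mul1r; field.
Qed.

Lemma omega_conj : omega^* = t0%:~R - omega.
Proof.
rewrite /omega; case: d_def => -[-> _] /=.
  by rewrite sqrtd_conj mulr0z sub0r.
by rewrite !(rmorphM, fmorphV, rmorphD) /= sqrtd_conj rmorph1 mulr1z; field.
Qed.

Lemma zomega_add x1 y1 x2 y2 :
  zomega x1 y1 + zomega x2 y2 = zomega (x1 + x2) (y1 + y2).
Proof. by rewrite /zomega !rmorphD; ring. Qed.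

Lemma zomega_opp x y : - zomega x y = zomega (- x) (- y).
Proof. by rewrite /zomega !rmorphN; ring. Qed.

Lemma zomega_mul x1 y1 x2 y2 : zomega x1 y1 * zomega x2 y2 =
  zomega (x1 * x2 - k * y1 * y2) (x1 * y2 + y1 * x2 + t0 * y1 * y2).
Proof.
rewrite /zomega !(rmorphD, rmorphB, rmorphM) /=.
transitivity (x1%:~R * x2%:~R + (x1%:~R * y2%:~R + y1%:~R * x2%:~R) * omega
  + y1%:~R * y2%:~R * (omega * omega) : algC); first by ring.
by rewrite omega_sqr; ring.
Qed.

Lemma zomega_conj x y : (zomega x y)^* = zomega (x + t0 * y) (- y).
Proof.
by rewrite /zomega rmorphD rmorphM /= !rmorph_int omega_conj !rmorphD rmorphM rmorphN; ring.
Qed.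

Lemma zomega_int (n : int) : zomega n 0 = n%:~R.
Proof. by rewrite /zomega mul0r addr0. Qed.

Lemma zomega_scale (c x y : int) : zomega (c * x) (c * y) = c%:~R * zomega x y.
Proof. by rewrite /zomega !rmorphM; ring. Qed.

Lemma zomega_normCK x y : `|zomega x y| ^+ 2 = (qform x y)%:~R.
Proof. by rewrite normCK zomega_conj zomega_mul -zomega_int /qform; congr zomega; ring. Qed.

Lemma omega_Aint : omega \in Aint.
Proof.
apply: (@Aint_quadratic_root _ omega^* t0 k); rewrite omega_conj; first by ring.
by rewrite mulrBr omega_sqr; ring.
Qed.

Lemma inR_zomega x y : inR d (zomega x y).
Proof.
split; first by rewrite rpredD ?rpredM ?Aint_int ?omega_Aint.
rewrite -/sqrtd /zomega /omega; case: d_def => -[-> _] /=.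
  by exists x%:~R, y%:~R; rewrite !rmorph_int.
exists (x%:~R + y%:~R / 2), (y%:~R / 2).
by rewrite rmorphD !fmorph_div !rmorph_int !rmorph_nat /=; field.
Qed.

Hypothesis dvdz_d_sqr : forall u : int, (d %| u * u)%Z -> (d %| u)%Z.
Hypothesis d_mod4 : t0 = 0 -> (d %% 4 = 2)%Z \/ (d %% 4 = 3)%Z.

Lemma inR_half_coords z : inR d z ->
  exists a b : int, 2 * z = a%:~R + b%:~R * sqrtd /\ (4 %| a * a - d * b * b)%Z.
Proof.
move=> [zA [p [q zE]]]; rewrite -/sqrtd in zE.
move: (Crat_rat p) (Crat_rat q) zE; move: (ratr p) (ratr q) => P Q PQ QQ zE.
have zcE : z^* = P - Q * sqrtd.
  by rewrite zE rmorphD rmorphM /= sqrtd_conj !conj_Crat //; ring.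
have zcA : z^* \in Aint by rewrite (Aint_aut Num.conj).
have sqrtdA : sqrtd \in Aint.
  apply: (@Aint_quadratic_root _ (- sqrtd) 0 (- d)); first by rewrite subrr.
  by rewrite mulrN sqrtd_sqr rmorphN.
have [a aE] : exists a : int, z + z^* = a%:~R.
  apply: Aint_Crat_int; first by rewrite rpredD.
  have -> : z + z^* = 2 * P by rewrite zcE zE; ring.
  by rewrite rpredM ?rpred_nat.
have [n nE] : exists n : int, z * z^* = n%:~R.
  apply: Aint_Crat_int; first by rewrite rpredM.
  have -> : z * z^* = P * P - Q * Q * d%:~R by rewrite zcE zE -sqrtd_sqr; ring.
  by rewrite rpredB ?rpredM ?rpred_int.
have [u uE] : exists u : int, (z - z^*) * sqrtd = u%:~R.
  apply: Aint_Crat_int; first by rewrite rpredM ?rpredB.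
  have -> : (z - z^*) * sqrtd = 2 * Q * d%:~R by rewrite zcE zE -sqrtd_sqr; ring.
  by rewrite !rpredM ?rpred_nat ?rpred_int.
have u2E : u * u = (a * a - 4 * n) * d.
  apply: (@intr_inj algC); rewrite !(rmorphM, rmorphB) /= -aE -nE -uE zcE zE.
  by rewrite -sqrtd_sqr; ring.
have /dvdzP[b uE'] : (d %| u)%Z by apply: dvdz_d_sqr; rewrite u2E dvdz_mull.
have d0 : (d%:~R : algC) != 0 by rewrite intr_eq0 ltr0_neq0 // d_lt0.
have bE : 2 * Q = b%:~R.
  by apply: (mulIf d0); rewrite -intrM -uE' -uE zcE zE -sqrtd_sqr; ring.
exists a, b; split; first by rewrite -aE -bE zcE zE; ring.
apply/dvdzP; exists n; apply: (@intr_inj algC).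
by rewrite !(rmorphM, rmorphB) /= -aE -nE -bE zcE zE -sqrtd_sqr; ring.
Qed.

Lemma inR_zomega_coords z : inR d z -> exists x y, z = zomega x y.
Proof.
move=> /inR_half_coords [a [b [zE ab4]]].
have two0 : (2 : algC) != 0 by rewrite pnatr_eq0.
rewrite /zomega /omega; case: d_def => -[t0E dE]; rewrite t0E /=.
  have /andP[/dvdzP[x aE] /dvdzP[y bE]] := dvdz2_of_norm_23mod4 (d_mod4 t0E) ab4.
  by exists x, y; apply: (mulfI two0); rewrite zE aE bE !rmorphM /=; ring.
rewrite dE in ab4; have /dvdzP[x xE] := dvdz2_sub_of_norm_1mod4 ab4.
exists x, b; apply: (mulfI two0).
have aE : a = x * 2 + b by lia.
by rewrite zE aE rmorphD rmorphM /=; field.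
Qed.

Lemma inRP z : inR d z <-> exists x y, z = zomega x y.
Proof. by split=> [/inR_zomega_coords | [x [y ->]]] //; exact: inR_zomega. Qed.

Lemma inR_add {u v} : inR d u -> inR d v -> inR d (u + v).
Proof.
by move=> /inRP[x1 [y1 ->]] /inRP[x2 [y2 ->]]; rewrite zomega_add; exact: inR_zomega.
Qed.

Lemma inR_opp {u} : inR d u -> inR d (- u).
Proof. by move=> /inRP[x [y ->]]; rewrite zomega_opp; exact: inR_zomega. Qed.

Lemma inR_mul {u v} : inR d u -> inR d v -> inR d (u * v).
Proof.
by move=> /inRP[x1 [y1 ->]] /inRP[x2 [y2 ->]]; rewrite zomega_mul; exact: inR_zomega.
Qed.

Lemma inR_conj {u} : inR d u -> inR d u^*.
Proof. by move=> /inRP[x [y ->]]; rewrite zomega_conj; exact: inR_zomega. Qed.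

Lemma inR_int (n : int) : inR d n%:~R.
Proof. by rewrite -zomega_int; exact: inR_zomega. Qed.

Lemma normCK_nat {z} : inR d z -> exists n : nat, `|z| ^+ 2 = n%:R.
Proof.
move=> /inRP[x [y ->]]; rewrite zomega_normCK.
have -> : qform x y = `|qform x y|%N by rewrite gez0_abs // qform_ge0.
by exists `|qform x y|%N.
Qed.

Lemma zomega_norm_bounds x y (c : nat) :
  0 < qform x y < c%:Z * c%:Z -> 0 < `|zomega x y| < c%:R.
Proof.
move=> /andP[q0 qc].
have sqr_lt (u v : algC) : 0 <= u -> 0 <= v -> (u < v) = (u ^+ 2 < v ^+ 2).
  by move=> u0 v0; rewrite ltr_pXn2r.
rewrite (sqr_lt 0) ?normr_ge0 // (sqr_lt `|_|) ?normr_ge0 ?ler0n //.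
rewrite expr0n /= zomega_normCK ltr0z q0 /=.
by rewrite expr2 -[c%:R]/((c%:Z)%:~R) -intrM ltr_int.
Qed.

(* 4 qform e 1 = (2 e + t0)^2 + 4 k - t0^2. *)
Lemma qform_root_bounds e (c : int) : - c <= 2 * e + t0 <= c ->
  4 * k < 3 * c * c -> 0 < qform e 1 < c * c.
Proof. by rewrite /qform; case: t0_01 => ->; nia. Qed.

Lemma qform_dvdz_sub (p x y x' y' : int) : (p %| x - x')%Z -> (p %| y - y')%Z ->
  (p %| qform x y - qform x' y')%Z.
Proof.
move=> px py.
have -> : qform x y - qform x' y' = (x - x') * (x + x')
    + t0 * ((x - x') * y + x' * (y - y')) + k * (y - y') * (y + y').
  by rewrite /qform; ring.
apply: rpredD; first apply: rpredD.
- exact: dvdz_mulr.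
- by apply: dvdz_mull; apply: rpredD; [apply: dvdz_mulr | apply: dvdz_mull].
- by apply: dvdz_mulr; apply: dvdz_mull.
Qed.

Lemma dh_prime_unit {p : nat} {x y} : prime p -> ~~ (p%:Z %| qform x y)%Z ->
  exists s t, [/\ inR d s, inR d t & s * zomega x y - p%:R * t = 1].
Proof.
move=> pp pNq; have [u [v uv]] := prime_bezoutz (pp : prime `|p%:Z|) pNq.
exists (u%:~R * (zomega x y)^*), (- v%:~R); split.
- by apply: inR_mul; [exact: inR_int | apply: inR_conj; exact: inR_zomega].
- by apply: inR_opp; exact: inR_int.
rewrite -mulrA [_^* * _]mulrC -normCK zomega_normCK.
move: (qform x y) uv => q uv.
rewrite [RHS](_ : 1 = (u * q + v * p%:Z)%:~R); last by rewrite uv.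
by rewrite intrD !intrM -pmulrn; ring.
Qed.

Lemma dh_prime_root {p : nat} {x y} : prime p -> (p%:Z %| qform x y)%Z ->
  ~~ (p%:Z %| y)%Z -> exists s t e, [/\ inR d s, inR d t, 0 <= e < p%:Z,
    (p%:Z %| qform e 1)%Z & s * zomega x y - p%:R * t = zomega e 1].
Proof.
move=> pp pq pNy; have [u [v uv]] := prime_bezoutz (pp : prime `|p%:Z|) pNy.
(* u y = 1 mod p, so u (x + y omega) = e + omega mod p. *)
set e := ((u * x) %% p%:Z)%Z; set A := ((u * x) %/ p%:Z)%Z.
have uxE : u * x = A * p%:Z + e by rewrite /A /e -divz_eq.
exists u%:~R, (zomega A (- v)), e; split; [exact: inR_int | exact: inR_zomega | | |].
- by rewrite modz_ge0 ?ltz_pmod //; have := prime_gt1 pp; lia.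
- have -> : qform e 1 = (qform e 1 - qform (u * x) (u * y)) + u * u * qform x y.
    by rewrite /qform; ring.
  rewrite rpredD ?dvdz_mull // qform_dvdz_sub //; apply/dvdzP.
    by exists (- A); rewrite uxE; ring.
  by exists v; rewrite -uv; ring.
rewrite -zomega_scale -[p%:R]/((p%:Z)%:~R : algC) -zomega_scale zomega_opp zomega_add.
by congr zomega; [rewrite uxE | rewrite -uv]; ring.
Qed.

Hypothesis small_roots : forall p e : int, 1 < p -> 0 <= e < p ->
  (p %| qform e 1)%Z -> 4 * k < 3 * p * p.

Lemma dh_prime {p : nat} {r} : prime p -> inR d r -> ~ dvdR d p%:R r ->
  exists s t, [/\ inR d s, inR d t & 0 < `|s * r - p%:R * t| < p%:R].
Proof.
move=> pp /inRP[x [y ->]] pNr.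
have p1 : 1 < p%:Z by have := prime_gt1 pp; lia.
have pNxy : ~~ ((p%:Z %| x)%Z && (p%:Z %| y)%Z).
  apply/negP => /andP[/dvdzP[x' xE] /dvdzP[y' yE]]; apply: pNr.
  exists (zomega x' y'); split; first exact: inR_zomega.
  by rewrite xE yE [x' * _]mulrC [y' * _]mulrC zomega_scale.
have [pq|pNq] := boolP (p%:Z %| qform x y)%Z; last first.
  have [s [t [hs ht E]]] := dh_prime_unit pp pNq.
  by exists s, t; split; rewrite // E normr1 ltr01 ltr1n prime_gt1.
have pNy : ~~ (p%:Z %| y)%Z.
  apply: contra pNxy => py; rewrite py andbT; apply: (dvdz_sqr_prime (pp : prime `|p%:Z|)).
  have : (p%:Z %| qform x y - (t0 * x + k * y) * y)%Z by rewrite rpredB // dvdz_mull.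
  by rewrite /qform (_ : _ - _ = x * x) //; ring.
have [s [t [e [hs ht e_range pe E]]]] := dh_prime_root pp pq pNy.
have bound := small_roots _ _ p1 e_range pe.
have [small|big] := lerP (2 * e + 1) p%:Z.
  exists s, t; split; rewrite // E; apply/zomega_norm_bounds/qform_root_bounds => //.
  by have := t0_01; clear -small e_range; case=> ->; lia.
exists s, (t + 1); split => //; first by apply: inR_add => //; exact: (inR_int 1).
have -> : s * zomega x y - p%:R * (t + 1) = zomega (e - p%:Z) 1.
  by rewrite [p%:R * _]mulrDr mulr1 opprD addrA E /zomega intrB -pmulrn; ring.
apply/zomega_norm_bounds/qform_root_bounds => //.
by have := t0_01; clear -big e_range; case=> ->; lia.
Qed.

Lemma dh_lattice {c : nat} {r} : (0 < c)%N -> inR d r -> ~ dvdR d c%:R r ->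
  exists s t, [/\ inR d s, inR d t & 0 < `|s * r - c%:R * t| < c%:R].
Proof.
elim/ltn_ind: c r => c IH r c0 hr cNr.
have c1 : (1 < c)%N.
  rewrite ltn_neqAle c0 andbT; apply/eqP => c1; apply: cNr.
  by exists r; split; rewrite // -c1 mul1r.
have pp := pdiv_prime c1; set p := pdiv c in pp.
have p0 : (0 < p)%N := prime_gt0 pp.
have [c' cE] : exists c', c = (p * c')%N by exists (c %/ p)%N; rewrite mulnC divnK // pdiv_dvd.
have c'0 : (0 < c')%N by move: c0; rewrite cE muln_gt0 => /andP[].
have cR : c%:R = p%:R * c'%:R :> algC by rewrite cE natrM.
have [[r' [hr' rE]]|pNr] := classic (dvdR d p%:R r).
  have c'c : (c' < c)%N by rewrite cE ltn_Pmull ?prime_gt1.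
  have c'Nr' : ~ dvdR d c'%:R r'.
    by move=> [w [hw r'E]]; apply: cNr; exists w; rewrite rE r'E cR mulrA.
  have [s [t [hs ht /andP[lo hi]]]] := IH c' c'c r' c'0 hr' c'Nr'.
  exists s, t; split => //.
  have -> : s * r - c%:R * t = p%:R * (s * r' - c'%:R * t) by rewrite rE cR; ring.
  by rewrite normrM normr_nat pmulr_rgt0 ?ltr0n // lo cR ltr_pM2l ?ltr0n.
have [s [t [hs ht /andP[lo hi]]]] := dh_prime pp hr pNr.
exists (c'%:R * s), t; split => //; first exact: inR_mul (inR_int c') hs.
have -> : c'%:R * s * r - c%:R * t = c'%:R * (s * r - p%:R * t) by rewrite cR; ring.
by rewrite normrM normr_nat pmulr_rgt0 ?ltr0n // lo cR [p%:R * c'%:R]mulrC ltr_pM2l ?ltr0n.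
Qed.

Lemma dedekind_hasse {a b} : inR d a -> inR d b -> a != 0 -> ~ dvdR d a b ->
  exists s t, [/\ inR d s, inR d t & 0 < `|s * b - t * a| < `|a|].
Proof.
move=> ha hb a0 aNb.
have [n nE] := normCK_nat ha.
have a_gt0 : 0 < `|a| by rewrite normr_gt0.
have n0 : (0 < n)%N by rewrite -(ltr0n algC) -nE exprn_gt0.
have aaE : a * a^* = n%:R by rewrite -normCK.
have nNr : ~ dvdR d n%:R (b * a^*).
  move=> [w [hw bE]]; apply: aNb; exists w; split => //.
  by apply: (mulIf (_ : a^* != 0)); rewrite ?conjC_eq0 // bE -aaE mulrAC.
have [s [t [hs ht]]] := dh_lattice n0 (inR_mul hb (inR_conj ha)) nNr.
have -> : s * (b * a^*) - n%:R * t = (s * b - t * a) * a^* by rewrite -aaE; ring.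
rewrite normrM norm_conjC -nE expr2 pmulr_lgt0 // ltr_pM2r // => lohi.
by exists s, t.
Qed.

Lemma ideal_principal {A} : is_ideal d A -> nonzero_set A ->
  exists m, [/\ inR d m, m <> 0 & forall z, A z <-> dvdR d m z].
Proof.
move=> [AR A0 AD AN AM] [a [Aa a0]].
have [n nE] := normCK_nat (AR _ Aa).
elim/ltn_ind: n a Aa a0 nE => n IH a Aa a0 nE.
have [allA|] := classic (forall b, A b -> dvdR d a b).
  exists a; split => //; first exact: AR.
  by move=> z; split=> [/allA | [w [hw ->]]] //; rewrite mulrC; apply: AM.
move=> /not_all_ex_not[b /(imply_to_and (A b))[Ab aNb]].
have [s [t [hs ht /andP[lo hi]]]] :=
  dedekind_hasse (AR _ Aa) (AR _ Ab) (introN eqP a0) aNb.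
have Ar : A (s * b - t * a) by apply: AD; [apply: AM | apply: AN; apply: AM].
have [m mE] := normCK_nat (AR _ Ar).
apply: (IH m _ _ Ar _ mE); last by apply/eqP; rewrite -normr_gt0.
by rewrite -(ltr_nat algC) -nE -mE ltr_pXn2r ?nnegrE ?normr_ge0.
Qed.

Lemma P_rel_ideal {A} : is_ideal d A -> nonzero_set A ->
  exists m, [/\ inR d m, m <> 0 &
    forall a b, inR d a -> inR d b -> (P_rel d A a b <-> tau_rel d m a b)].
Proof.
move=> hA hA0; have [m [hm m0 Am]] := ideal_principal hA hA0.
have m0' : m != 0 by apply/eqP.
exists m; split => // a b ha hb.
exact: (P_rel_tau _ (inR_int 1) (@inR_add) (@inR_opp) (@inR_mul) (@ideal_principal)
  hm m0' ha hb (fun z _ => Am z)).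
Qed.

Lemma P_rel_norm_ideal {A} : is_ideal d A -> nonzero_set A ->
  exists n : nat, (0 < n)%N /\ forall a b, inR d a -> inR d b ->
    (P_rel d (prod_set A (conj_set A)) a b <-> tau_rel d n%:R a b).
Proof.
move=> hA hA0; have [m [hm m0 Am]] := ideal_principal hA hA0.
have [n nE] := normCK_nat hm.
have n0 : (0 < n)%N by rewrite -(ltr0n algC) -nE exprn_gt0 // normr_gt0; apply/eqP.
have n0' : n%:R != 0 :> algC by rewrite pnatr_eq0 -lt0n.
have prodE z : prod_set A (conj_set A) z <-> dvdR d n%:R z.
  rewrite -nE normCK.
  exact: (prod_conj_principal _ (inR_int 1) (@inR_add) (@inR_opp) (@inR_mul) (@inR_conj)).
exists n; split => // a b ha hb.
exact: (P_rel_tau _ (inR_int 1) (@inR_add) (@inR_opp) (@inR_mul) (@ideal_principal)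
  (inR_int n) n0' ha hb (fun z _ => prodE z)).
Qed.

End QuadraticOrder.

(** * The Heegner numbers *)

(* Any p with 1 < p and 3 p^2 <= 4 k is at most k, so [iota 2 k] covers all of them. *)
Definition no_small_root (t0 k : nat) : bool :=
  all (fun p => (3 * p * p <= 4 * k)%N ==>
     all (fun e => ~~ (p %| e * e + t0 * e + k)%N) (iota 0 p)) (iota 2 k).

Lemma no_small_rootP (t0 k : nat) : no_small_root t0 k ->
  forall p e : int, 1 < p -> 0 <= e < p ->
  (p %| qform t0 k e 1)%Z -> 4 * k%:Z < 3 * p * p.
Proof.
move=> /allP hk [p|//] [e|//] /= p1 ep hdiv.
rewrite ltNge; apply/negP => hle.
have hp : (p \in iota 2 k) by rewrite mem_iota; nia.
have he : (e \in iota 0 p) by rewrite mem_iota; lia.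
have /implyP/(_ _)/allP/(_ e he)/negP := hk p hp; apply; first by lia.
by move: hdiv; rewrite /qform !mulr1 -!PoszM -!PoszD dvdzE.
Qed.

(* t0 and k are the trace and norm of omega; the third and fourth conditions make
   Z[omega] the whole ring of integers, the last one drives the Dedekind-Hasse argument. *)
Definition heegner_conditions (d t0 k : int) : Prop :=
  [/\ (t0 = 0 /\ d = - k) \/ (t0 = 1 /\ d = 1 - 4 * k), 0 < k,
      forall u : int, (d %| u * u)%Z -> (d %| u)%Z,
      t0 = 0 -> (d %% 4 = 2)%Z \/ (d %% 4 = 3)%Z &
      forall p e : int, 1 < p -> 0 <= e < p ->
        (p %| qform t0 k e 1)%Z -> 4 * k < 3 * p * p].

Lemma heegner_conditions_1mod4 (k : nat) : prime (4 * k - 1) -> no_small_root 1 k ->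
  heegner_conditions (1 - 4 * k%:Z) 1 k.
Proof.
move=> pk hk; have k0 : (0 < k)%N by case: k pk {hk}.
split; [by right | by [] | | | exact: no_small_rootP].
  move=> u; apply: dvdz_sqr_prime.
  by rewrite (_ : `|_|%N = (4 * k - 1)%N) //; lia.
by move=> /eqP; rewrite oner_eq0.
Qed.

Lemma heegner_conditionsP {d} : d \in heegner_d -> exists t0 k, heegner_conditions d t0 k.
Proof.
have -> : heegner_d =
    [:: -1; -2] ++ map (fun k : nat => 1 - 4 * k%:Z) [:: 1; 2; 3; 5; 11; 17; 41] by [].
rewrite mem_cat => /orP[|/mapP[k kin ->]].
  rewrite !inE => /orP[]/eqP->.
    exists 0, 1; split; [by left | by [] | | by right | exact: (@no_small_rootP 0 1)].
    by move=> u _; rewrite dvdzE.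
  exists 0, 2; split; [by left | by [] | | by left | exact: (@no_small_rootP 0 2)].
  by move=> u; apply: dvdz_sqr_prime.
have /allP/(_ k kin)/andP[pk hk] :
  all (fun k => prime (4 * k - 1) && no_small_root 1 k) [:: 1; 2; 3; 5; 11; 17; 41] by [].
by exists 1, k; exact: heegner_conditions_1mod4.
Qed.

Theorem theorem7 (d : int) (hd : d \in heegner_d) (A : algC -> Prop)
    (hA : is_ideal d A) (hA0 : nonzero_set A) :
  (exists m : algC, [/\ inR d m, m <> 0 &
     forall a b, inR d a -> inR d b -> (P_rel d A a b <-> tau_rel d m a b)]) /\
  (exists n : nat, (0 < n)%N /\
     forall a b, inR d a -> inR d b ->
       (P_rel d (prod_set A (conj_set A)) a b <-> tau_rel d n%:R a b)).
Proof.
have [t0 [k [dE k0 dsq dmod small]]] := heegner_conditionsP hd.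
split; first exact: (P_rel_ideal _ _ _ dE k0 dsq dmod small hA hA0).
exact: (P_rel_norm_ideal _ _ _ dE k0 dsq dmod small hA hA0).
Qed.
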